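(* Let $q\geq 2$ be an integer and $u_0,r$ positive integers with $\gcd(u_0+r,q)=1$. Define $u_n=u_0+r[n]_q$ for $n\ge1$, where $[n]_q=\frac{q^n-1}{q-1}$. Then for all positive integers $n,m$ with $m\leq\lfloor n/2\rfloor$, \[\mathrm{lcm}(u_m,u_{m+1},\dots,u_n)\geq \gcd(u_0,r)\left(\frac{r}{\gcd(u_0,r)}\right)^{\frac n2+1}q^{\frac{n(n-2)}{4}}.\] *)

From mathcomp Require Import all_boot all_order all_algebra.
From mathcomp Require Import all_classical all_reals all_analysis.

(* q-integer [n]_q = (q^n - 1)/(q - 1) (exact division in nat for q >= 2) *)
Definition qint (q n : nat) : nat := (q ^ n - 1) %/ (q - 1).

Definition useq (q u0 r n : nat) : nat := u0 + r * qint q n.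

Definition lcm_range (q u0 r m n : nat) : nat :=
  \big[lcmn/1%N]_(m <= i < n.+1) useq q u0 r i.

From mathcomp Require Import all_boot all_order all_algebra.
From mathcomp Require Import all_classical all_reals all_analysis.
From mathcomp Require Import lra.
Import Order.TTheory GRing.Theory Num.Theory.

(* Write g = gcd(u0, r), u0 = g a and r = g b, so that u_k = g v_k with
   v_k = a + b [k]_q and gcd(a, b) = 1.  For 1 <= i < k we have
   v_k = v_i + b q^i [k - i]_q with v_i coprime to b q^i, so any common divisor
   of v_i and v_k divides [k - i]_q.  Counting, for each prime power, the v_k it
   divides then gives
     prod_(s <= k <= n) v_k  |  lcm(v_s, ..., v_n) * prod_(1 <= d <= n - s) [d]_q,
   while v_k >= b [k]_q and [s + d]_q >= q^s [d]_q bound the left-hand side from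
   below.  Taking s = floor(n/2) and comparing exponents gives the theorem. *)

Section QInteger.

Variable q : nat.
Hypothesis q_gt1 : 1 < q.

Lemma qintE n : qint q n = \sum_(i < n) q ^ i.
Proof. by rewrite /qint subn1 predn_exp -subn1 mulKn // subn_gt0. Qed.

Lemma qint0 : qint q 0 = 0.
Proof. by rewrite qintE big_ord0. Qed.

Lemma qintS n : qint q n.+1 = qint q n + q ^ n.
Proof. by rewrite !qintE big_ord_recr. Qed.

Lemma qint1 : qint q 1 = 1.
Proof. by rewrite qintS qint0. Qed.

Lemma qintD i d : qint q (i + d) = qint q i + q ^ i * qint q d.
Proof.
elim: d => [|d IHd]; first by rewrite addn0 qint0 muln0 addn0.
by rewrite addnS !qintS IHd mulnDr expnD addnA.
Qed.

Lemma expn_le_qint k : q ^ k <= qint q k.+1.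
Proof. by rewrite qintS leq_addl. Qed.

Lemma qint_gt0 k : 0 < qint q k.+1.
Proof. by apply: leq_trans (expn_le_qint k); rewrite expn_gt0 ltnW. Qed.

Lemma prod_qint_gt0 n : 0 < \prod_(1 <= d < n) qint q d.
Proof. by rewrite big_add1 prodn_gt0 // => d; apply: qint_gt0. Qed.

Lemma prod_qint_ge m N : 0 < m ->
  q ^ (m.-1 + m * N) * \prod_(1 <= d < N.+1) qint q d
    <= \prod_(m <= k < (m + N).+1) qint q k.
Proof.
move=> m_gt0; elim: N => [|N IHN].
  by rewrite addn0 muln0 addn0 big_nat1 big_geq // muln1 -{2}(prednK m_gt0) expn_le_qint.
rewrite big_nat_recr //= [X in _ <= X]big_nat_recr ?leq_addr //= mulnS addnCA expnD.
rewrite [q ^ m * _]mulnC mulnACA.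
apply: leq_mul; first by rewrite addnS.
by rewrite qintD leq_addl.
Qed.

End QInteger.

Lemma count_le_gaps (P Q : pred nat) m n :
  (forall i k, m <= i -> i < k <= n -> P i -> P k -> Q (k - i)) ->
  \sum_(m <= k < n.+1) P k <= 1 + \sum_(1 <= d < (n - m).+1) Q d.
Proof.
have [j] := ubnP (n.+1 - m); elim: j m => // j IHj m lt_nm_j gapPQ.
have [lt_nm | le_mn] := ltnP n m; first by rewrite big_geq.
(* If [P m] holds, every later [k] with [P k] is charged to the gap [k - m]. *)
rewrite big_ltn ?ltnS //; case Pm: (P m) => /=.
  rewrite add1n ltnS -add1n big_addn subSn // big_seq [X in _ <= X]big_seq.
  apply: leq_sum => d; rewrite mem_index_iota => /andP[d_gt0 lt_d_nm].
  case Pdm: (P (d + m)) => //.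
  rewrite -(addnK m d) (gapPQ m (d + m)) // -{1}[m]add0n ltn_add2r d_gt0 /=.
  by rewrite addnC -leq_subRL // -ltnS.
apply: leq_trans (IHj m.+1 _ _) _.
- by rewrite subSS -(subSn le_mn) -ltnS.
- by move=> i k /ltnW; apply: gapPQ.
rewrite leq_add2l [X in _ <= X](@big_cat_nat _ _ _ (n - m.+1).+1) ?leq_addr //.
by rewrite ltnS subnS leq_pred.
Qed.

Lemma dvdn_biglcm_mem (I : eqType) (r : seq I) (F : I -> nat) i :
  i \in r -> F i %| \big[lcmn/1]_(j <- r) F j.
Proof. by move=> ri; rewrite (big_rem i) ?dvdn_lcml. Qed.

Lemma biglcm_gt0 (I : Type) (r : seq I) (F : I -> nat) :
  (forall i, 0 < F i) -> 0 < \big[lcmn/1]_(i <- r) F i.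
Proof. by move=> F_gt0; elim/big_ind: _ => // x y; rewrite lcmn_gt0 => ->. Qed.

Lemma logn_prod p (I : eqType) (r : seq I) (F : I -> nat) :
  (forall i, i \in r -> 0 < F i) ->
  logn p (\prod_(i <- r) F i) = \sum_(i <- r) logn p (F i).
Proof.
elim: r => [|i r IHr] F_gt0; first by rewrite !big_nil logn1.
have Fr_gt0 j : j \in r -> 0 < F j by move=> rj; rewrite F_gt0 // inE rj orbT.
by rewrite !big_cons lognM ?IHr ?F_gt0 ?mem_head // big_seq prodn_cond_gt0.
Qed.

Lemma logn_count_dvd_le p x B : prime p -> 0 < x -> x <= B ->
  logn p x = \sum_(1 <= e < B) (p ^ e %| x).
Proof.
move=> p_pr x_gt0 le_xB; rewrite logn_count_dvd // [RHS](@big_cat_nat _ _ _ x) //=.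
rewrite [X in _ + X]big1_seq ?addn0 // => e /andP[_].
rewrite mem_index_iota => /andP[le_xe _]; suff /negbTE -> : ~~ (p ^ e %| x) by [].
apply: contraTN le_xe => /(dvdn_leq x_gt0) le_pe_x; rewrite -ltnNge.
exact: leq_trans (ltn_expl _ (prime_gt1 p_pr)) le_pe_x.
Qed.

Section ProductOverLcm.

Variables (v Q : nat -> nat) (m n : nat).
Hypothesis v_gt0 : forall k, 0 < v k.
Hypothesis Q_gt0 : forall d, 0 < d -> 0 < Q d.
Hypothesis dvdn_gap : forall i k c,
  m <= i -> i < k <= n -> c %| v i -> c %| v k -> c %| Q (k - i).

Local Notation L := (\big[lcmn/1]_(m <= k < n.+1) v k).
Local Notation D := (\prod_(1 <= d < (n - m).+1) Q d).

Lemma count_dvd_le_lcm_gaps c :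
  \sum_(m <= k < n.+1) (c %| v k) <= (c %| L) + \sum_(1 <= d < (n - m).+1) (c %| Q d).
Proof.
have [c_L | c_notL] := boolP (c %| L).
  by apply: count_le_gaps => i k le_mi lt_ikn; apply: dvdn_gap.
rewrite big1_seq // => k /andP[_ k_in]; suff /negbTE -> : ~~ (c %| v k) by [].
by apply: contraNN c_notL => /dvdn_trans; apply; apply: dvdn_biglcm_mem.
Qed.

Lemma prod_dvd_lcm_mul_prod_gaps : \prod_(m <= k < n.+1) v k %| L * D.
Proof.
have L_gt0 : 0 < L by apply: biglcm_gt0.
have Q_gt0_in d : d \in index_iota 1 (n - m).+1 -> 0 < Q d.
  by rewrite mem_index_iota => /andP[d_gt0 _]; apply: Q_gt0.
have D_gt0 : 0 < D by rewrite big_seq prodn_cond_gt0.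
set B := L * D; have B_gt0 : 0 < B by rewrite muln_gt0 L_gt0.
apply/dvdn_partP => [|p]; first exact: prodn_gt0.
rewrite mem_primes => /andP[p_pr _].
rewrite p_part pfactor_dvdn ?prodn_gt0 // lognM // !logn_prod //.
have v_le_B k : k \in index_iota m n.+1 -> v k <= B.
  by move=> k_in; apply: leq_trans (leq_pmulr _ D_gt0); apply/dvdn_leq/dvdn_biglcm_mem.
have Q_le_B d : d \in index_iota 1 (n - m).+1 -> Q d <= B.
  move=> d_in; apply: leq_trans (leq_pmull _ L_gt0).
  by apply: dvdn_leq D_gt0 _; rewrite (big_rem d) ?dvdn_mulr.
(* With the common bound B, every valuation counts the [p ^ e], [1 <= e < B],
   dividing its argument, so the comparison can be made exponent by exponent. *)
rewrite (logn_count_dvd_le p L B) ?leq_pmulr //.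
rewrite (eq_big_seq _ (fun k k_in =>
  logn_count_dvd_le p _ B p_pr (v_gt0 k) (v_le_B k k_in))).
rewrite [X in _ <= _ + X](eq_big_seq (fun d => \sum_(1 <= e < B) (p ^ e %| Q d))); last first.
  by move=> d d_in; rewrite (logn_count_dvd_le p _ B) ?Q_gt0_in ?Q_le_B.
rewrite exchange_big [X in _ <= _ + X]exchange_big -big_split /=.
by apply: leq_sum => e _; apply: count_dvd_le_lcm_gaps.
Qed.

End ProductOverLcm.

Lemma useq_mull q g a b k : useq q (g * a) (g * b) k = g * useq q a b k.
Proof. by rewrite /useq mulnDr mulnA. Qed.

Lemma useqD q a b i d : 1 < q ->
  useq q a b (i + d) = useq q a b i + b * q ^ i * qint q d.
Proof. by move=> q_gt1; rewrite /useq qintD // mulnDr -addnA mulnA. Qed.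

Section CoprimeParameters.

Variables q a b : nat.
Hypotheses (q_gt1 : 1 < q) (a_gt0 : 0 < a).
Hypotheses (coprime_ab : coprime a b) (coprime_abq : coprime (a + b) q).

Lemma useq_gt0 k : 0 < useq q a b k.
Proof. by rewrite addn_gt0 a_gt0. Qed.

Lemma coprime_useq_r k : coprime (useq q a b k) b.
Proof.
by rewrite /useq coprime_sym /coprime mulnC addnC gcdnMDl -/(coprime b a) coprime_sym.
Qed.

Lemma coprime_useq_q k : 0 < k -> coprime (useq q a b k) q.
Proof.
case: k => // d _; rewrite -add1n useqD // {1}/useq qint1 // muln1 mulnAC.
by rewrite coprime_sym /coprime addnC gcdnMDl -/(coprime q (a + b)) coprime_sym.
Qed.

Lemma dvdn_useq_gap i k c : 0 < i -> i < k ->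
  c %| useq q a b i -> c %| useq q a b k -> c %| qint q (k - i).
Proof.
move=> i_gt0 lt_ik c_ui; rewrite -{1}(subnKC (ltnW lt_ik)) useqD // dvdn_addr //.
have coprime_c_bq : coprime c (b * q ^ i).
  by apply: coprime_dvdl c_ui _; rewrite coprimeMr coprime_useq_r coprimeXr ?coprime_useq_q.
by rewrite Gauss_dvdr.
Qed.

Lemma lcm_useq_ge s N : 0 < s ->
  b ^ N.+1 * q ^ (s.-1 + s * N) <= \big[lcmn/1]_(s <= k < (s + N).+1) useq q a b k.
Proof.
move=> s_gt0; set L := \big[lcmn/1]_(_ <= k < _) _.
set P := \prod_(s <= k < (s + N).+1) useq q a b k.
set D := \prod_(1 <= d < N.+1) qint q d.
have D_gt0 : 0 < D := prod_qint_gt0 q q_gt1 N.+1.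
have P_ge : b ^ N.+1 * q ^ (s.-1 + s * N) * D <= P.
  rewrite -mulnA.
  apply: leq_trans (_ : b ^ N.+1 * \prod_(s <= k < (s + N).+1) qint q k <= _).
    by rewrite leq_mul2l prod_qint_ge ?orbT.
  have -> : N.+1 = (s + N).+1 - s by rewrite subSn ?leq_addr // addKn.
  rewrite -prod_nat_const_nat -big_split /=.
  by apply: leq_prod => k _; apply: leq_addl.
have P_dvd : P %| L * D.
  rewrite /D -[N](addKn s).
  apply: prod_dvd_lcm_mul_prod_gaps => [k|[|d] //|i k c le_si /andP[lt_ik _]].
  - exact: useq_gt0.
  - by rewrite qint_gt0.
  - by apply: dvdn_useq_gap => //; apply: leq_trans le_si.
have LD_gt0 : 0 < L * D by rewrite muln_gt0 D_gt0 biglcm_gt0 //; apply: useq_gt0.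
by rewrite -(leq_pmul2r D_gt0); apply: leq_trans P_ge (dvdn_leq LD_gt0 P_dvd).
Qed.

End CoprimeParameters.

Lemma dvdn_lcm_range q u0 r m n k :
  m <= k <= n -> useq q u0 r k %| lcm_range q u0 r m n.
Proof. by move=> kmn; apply: dvdn_biglcm_mem; rewrite mem_index_iota ltnS. Qed.

Lemma lcm_range_gt0 q u0 r m n : 0 < u0 -> 0 < lcm_range q u0 r m n.
Proof. by move=> u0_gt0; apply: biglcm_gt0 => k; rewrite addn_gt0 u0_gt0. Qed.

Lemma mul_biglcm_dvdn_lcm_range q g a b m s n : m <= s <= n ->
  g * \big[lcmn/1]_(s <= k < n.+1) useq q a b k %| lcm_range q (g * a) (g * b) m n.
Proof.
case/andP=> le_ms le_sn; rewrite big_seq.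
apply: (big_ind (fun x => g * x %| _)) => [|x y gx gy|k].
- rewrite muln1 (dvdn_trans _ (dvdn_lcm_range q _ _ m n n _)) ?leqnn ?(leq_trans le_ms) //.
  by rewrite useq_mull dvdn_mulr.
- by rewrite muln_lcmr dvdn_lcm gx.
- rewrite mem_index_iota ltnS -useq_mull => /andP[le_sk le_kn].
  by rewrite dvdn_lcm_range // (leq_trans le_ms).
Qed.

Lemma coprime_divn_gcd u r : 0 < gcdn u r -> coprime (u %/ gcdn u r) (r %/ gcdn u r).
Proof.
move=> g_gt0; rewrite /coprime -(eqn_pmul2l g_gt0) muln1 muln_gcdr.
by rewrite ![gcdn u r * _]mulnC !divnK ?dvdn_gcdl ?dvdn_gcdr.
Qed.

Lemma half_add_uphalf n : n./2 + uphalf n = n.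
Proof. by rewrite uphalf_half addnCA addnn odd_double_half. Qed.

Lemma lcm_range_ge q g a b m n : 1 < q -> 0 < g -> 0 < a ->
  coprime a b -> coprime (a + b) q -> 0 < m -> m <= n./2 ->
  g * (b ^ (uphalf n).+1 * q ^ ((n./2).-1 + n./2 * uphalf n))
    <= lcm_range q (g * a) (g * b) m n.
Proof.
move=> q_gt1 g_gt0 a_gt0 coprime_ab coprime_abq m_gt0 le_m_half.
have := lcm_useq_ge _ _ _ q_gt1 a_gt0 coprime_ab coprime_abq n./2 (uphalf n).
rewrite half_add_uphalf => /(_ (leq_trans m_gt0 le_m_half)) lcm_ge.
apply: leq_trans (leq_mul (leqnn g) lcm_ge) (dvdn_leq _ _).
  by rewrite lcm_range_gt0 // muln_gt0 g_gt0.
by rewrite mul_biglcm_dvdn_lcm_range // le_m_half -{2}(half_add_uphalf n) leq_addr.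
Qed.

Local Open Scope ring_scope.

Lemma powR_le_exprn (R : realType) (x e : R) (k : nat) :
  1 <= x -> e <= k%:R -> x `^ e <= x ^+ k.
Proof.
move=> x_ge1 le_ek; rewrite -powR_mulrn ?(le_trans ler01 x_ge1) //.
exact: ler_powR.
Qed.

Lemma half_exponent_le (R : realType) (n : nat) :
  n%:R / 2 + 1 <= (uphalf n).+1%:R :> R.
Proof.
rewrite -[(uphalf n).+1]addn1 -[in X in X / 2](half_add_uphalf n) uphalf_half !natrD.
by case: (odd n) => /=; lra.
Qed.

Lemma quarter_exponent_le (R : realType) (n : nat) : (0 < n./2)%N ->
  n%:R * (n%:R - 2) / 4 <= ((n./2).-1 + n./2 * uphalf n)%:R :> R.
Proof.
move=> half_gt0; rewrite -{1 2}(half_add_uphalf n) uphalf_half -subn1.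
have : 1 <= (n./2)%:R :> R by rewrite ler1n.
rewrite !natrD natrM natrD natrB //.
by case: (odd n) => /= ?; nra.
Qed.

Theorem theorem4 (R : realType) (q u0 r : nat) :
  (2 <= q)%N -> (0 < u0)%N -> (0 < r)%N -> coprime (u0 + r) q ->
  forall n m : nat, (0 < n)%N -> (0 < m)%N -> (m <= n./2)%N ->
  (gcdn u0 r)%:R * (((r%:R / (gcdn u0 r)%:R) : R) `^ (n%:R / 2 + 1))
    * ((q%:R : R) `^ ((n%:R * (n%:R - 2)) / 4))
  <= (lcm_range q u0 r m n)%:R.
Proof.
move=> q_gt1 u0_gt0 r_gt0 coprime_u0r_q n m _ m_gt0 le_m_half.
set g := gcdn u0 r; set a := (u0 %/ g)%N; set b := (r %/ g)%N.
have g_gt0 : (0 < g)%N by rewrite gcdn_gt0 u0_gt0.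
have u0E : u0 = (g * a)%N by rewrite mulnC divnK ?dvdn_gcdl.
have rE : r = (g * b)%N by rewrite mulnC divnK ?dvdn_gcdr.
have coprime_ab : coprime a b := coprime_divn_gcd _ _ g_gt0.
have coprime_abq : coprime (a + b) q.
  by move: coprime_u0r_q; rewrite u0E rE -mulnDr coprimeMl => /andP[].
have a_gt0 : (0 < a)%N by move: u0_gt0; rewrite u0E muln_gt0 => /andP[].
have b_gt0 : (0 < b)%N by move: r_gt0; rewrite rE muln_gt0 => /andP[].
have -> : r%:R / g%:R = b%:R :> R.
  by rewrite rE natrM [X in X / _]mulrC mulfK // pnatr_eq0 -lt0n.
set e := ((n./2).-1 + n./2 * uphalf n)%N.
apply: le_trans (_ : (g * (b ^ (uphalf n).+1 * q ^ e))%:R <= _).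
  rewrite natrM -mulrA ler_pM2l ?ltr0n // natrM !natrX.
  apply: ler_pM; rewrite ?powR_ge0 //.
    by apply: powR_le_exprn (half_exponent_le _ _); rewrite ler1n.
  apply: powR_le_exprn; first by rewrite ler1n ltnW.
  by apply: quarter_exponent_le; apply: leq_trans le_m_half.
by rewrite ler_nat u0E rE lcm_range_ge.
Qed.
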